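(* Let $L$ be a finite-dimensional pure, nonnilpotent, solvable Lie algebra over $\mathbb{C}$ of breadth $2$ such that $\dim[L,L]=3$ and $\dim\big(L/Z(L)\big)=3$. Then $[L,L]$ is isomorphic to the $3$-dimensional Heisenberg Lie algebra (i.e. it has a basis $\{x,y,z\}$ with $[x,y]=z$ and $[x,z]=[y,z]=0$).
   Context: For $x\in L$, $b(x)=\mathrm{rank}(\mathrm{ad}_x)$ and the breadth of $L$ is $b(L)=\max\{b(x)\mid x\in L\}$. $L$ is pure if it has no abelian ideal as a direct summand; equivalently $Z(L)\subseteq[L,L]$, where $Z(L)$ is the center. *)

(* Finite-dimensional Lie algebras over a field F are modelled
   as the coordinate space 'rV[F]_n equipped with a bracket map. *)
From HB Require Import structures.
From mathcomp Require Import all_boot all_algebra.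
From mathcomp Require Import reals.
From mathcomp Require Export complex.
Set Implicit Arguments. Unset Strict Implicit. Unset Printing Implicit Defensive.
Import GRing.Theory.
Local Open Scope ring_scope.

Section Lie.
Variables (F : fieldType) (n : nat).
Notation V := 'rV[F]_n.
Variable br : V -> V -> V.

Definition is_lie : Prop :=
  [/\ forall (a : F) (x y z : V), br (a *: x + y) z = a *: br x z + br y z,
      forall (a : F) (x y z : V), br z (a *: x + y) = a *: br z x + br z y,
      forall x : V, br x x = 0
    & forall x y z : V, br x (br y z) + br y (br z x) + br z (br x y) = 0].

(* [U, W] : the subspace spanned by all brackets [u, w], u in U, w in W
   (spanned by the brackets of basis vectors, by bilinearity). *)
Definition brv (U W : {vspace V}) : {vspace V} :=
  (\sum_(i < \dim U) \sum_(j < \dim W)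
     <[br (tnth (vbasis U) i) (tnth (vbasis W) j)]>)%VS.

Definition derived : {vspace V} := brv fullv fullv.

(* center Z(L) = {x | forall y, [x, y] = 0}, as the intersection of the
   kernels of x |-> [x, e_j] over the standard basis e_j. *)
Definition centerv : {vspace V} :=
  (\bigcap_(j < n) lker (linfun (fun x : V => br x (delta_mx ord0 j))))%VS.

Fixpoint lcs (k : nat) : {vspace V} :=
  if k is k'.+1 then brv fullv (lcs k') else fullv.
Fixpoint dser (k : nat) : {vspace V} :=
  if k is k'.+1 then brv (dser k') (dser k') else fullv.

Definition nilpotent : Prop := exists k, lcs k = 0%VS.
Definition solvable : Prop := exists k, dser k = 0%VS.

Definition pure : Prop := (centerv <= derived)%VS.

Definition breadth_at (x : V) : nat := \dim (limg (linfun (br x))).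
Definition has_breadth (b : nat) : Prop :=
  (forall x, (breadth_at x <= b)%N) /\ exists x, breadth_at x = b.

End Lie.

(* Choose a, b, c spanning L modulo the centre Z.  The bracket only depends on
   classes modulo Z, so [b,c], [c,a], [a,b] span [L,L] and hence form a basis
   of it.  Reducing this basis modulo Z gives a 3x3 matrix N in the
   coordinates a, b, c, and the Jacobi identity for a, b, c, read in the basis
   of [L,L], says exactly that N is symmetric.  With M the adjugate of N, one
   finds [[c,a],[a,b]] = det N . a modulo Z, and cyclically.  If det N <> 0,
   then a, b, c lie in [L,L] + Z = [L,L] by purity, so L is perfect and not
   solvable.  Otherwise [[L,L],[L,L]] is central: either some bracket [u,v] of
   elements of [L,L] is nonzero, and u, v, [u,v] is a Heisenberg basis, or
   M = 0, which forces [L,[L,L]] into Z and makes L nilpotent. *)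

From HB Require Import structures.
From mathcomp Require Import all_boot all_algebra.
From mathcomp Require Import reals.
From mathcomp Require Import complex.
From mathcomp Require Import ring.
Import GRing.Theory.
Local Open Scope ring_scope.

Section LieAlgebra.
Set Implicit Arguments. Unset Strict Implicit.
Variables (F : fieldType) (n : nat).
Notation V := 'rV[F]_n.
Variable br : V -> V -> V.
Hypothesis lieL : is_lie br.
Notation Z := (centerv br).
Notation D := (derived br).

Lemma brZDl a x y z : br (a *: x + y) z = a *: br x z + br y z.
Proof. by case: lieL. Qed.

Lemma brZDr a x y z : br z (a *: x + y) = a *: br z x + br z y.
Proof. by case: lieL. Qed.

Lemma brxx x : br x x = 0.
Proof. by case: lieL. Qed.

Lemma jacobi x y z : br x (br y z) + br y (br z x) + br z (br x y) = 0.
Proof. by case: lieL. Qed.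

Lemma brDl x y z : br (x + y) z = br x z + br y z.
Proof. by have := brZDl 1 x y z; rewrite !scale1r. Qed.

Lemma brDr x y z : br z (x + y) = br z x + br z y.
Proof. by have := brZDr 1 x y z; rewrite !scale1r. Qed.

Lemma br0l z : br 0 z = 0.
Proof. by apply: (addrI (br 0 z)); rewrite -brDl !addr0. Qed.

Lemma br0r z : br z 0 = 0.
Proof. by apply: (addrI (br z 0)); rewrite -brDr !addr0. Qed.

Lemma brZl a x z : br (a *: x) z = a *: br x z.
Proof. by rewrite -[a *: x]addr0 brZDl br0l addr0. Qed.

Lemma brZr a x z : br z (a *: x) = a *: br z x.
Proof. by rewrite -[a *: x]addr0 brZDr br0r addr0. Qed.

Lemma brC x y : br y x = - br x y.
Proof.
apply/eqP; rewrite -addr_eq0 addrC.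
by have := brxx (x + y); rewrite brDl !brDr !brxx add0r addr0 => ->.
Qed.

Lemma br_suml I (r : seq I) (P : pred I) f y :
  br (\sum_(i <- r | P i) f i) y = \sum_(i <- r | P i) br (f i) y.
Proof. by elim/big_rec2: _ => [|i x1 x2 _ <-]; rewrite ?br0l ?brDl. Qed.

Lemma br_sumr I (r : seq I) (P : pred I) f y :
  br y (\sum_(i <- r | P i) f i) = \sum_(i <- r | P i) br y (f i).
Proof. by elim/big_rec2: _ => [|i x1 x2 _ <-]; rewrite ?br0r ?brDr. Qed.

(* Bracketing on the right as a linear map, so that [lfunE] applies to the
   kernels defining [centerv]. *)
Definition brl (y x : V) := br x y.

Lemma brl_is_linear y : linear (brl y).
Proof. by move=> a x z; rewrite /brl brZDl. Qed.

HB.instance Definition _ y :=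
  GRing.isLinear.Build F V V *:%R (brl y) (brl_is_linear y).

Lemma br_centerl x y : x \in Z -> br x y = 0.
Proof.
rewrite memvE => /subv_bigcapP Zx.
rewrite (row_sum_delta y) br_sumr big1 // => j _.
have := Zx j isT; rewrite -memvE memv_ker (lfunE (brl _)) => /eqP brx_ej.
by rewrite brZr [br x _]brx_ej scaler0.
Qed.

Lemma br_centerr x y : x \in Z -> br y x = 0.
Proof. by move=> /br_centerl brx0; rewrite brC brx0 oppr0. Qed.

Lemma br_modZ x x' y y' : x - x' \in Z -> y - y' \in Z -> br x y = br x' y'.
Proof.
move=> /br_centerl Zx /br_centerr Zy.
by rewrite -(subrK x' x) brDl Zx add0r -(subrK y' y) brDr Zy add0r.
Qed.

Lemma brv_memv (U W : {vspace V}) u w : u \in U -> w \in W -> br u w \in brv br U W.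
Proof.
move=> Uu Ww; rewrite (coord_vbasis Uu) (coord_vbasis Ww) br_suml.
apply: memv_sumr => i _; rewrite br_sumr; apply: memv_sumr => j _.
by rewrite brZl brZr; apply/memvZ/memvZ; rewrite !(tnth_nth 0) memv_line.
Qed.

Lemma brv_subv (U W S : {vspace V}) :
  (forall u w, u \in U -> w \in W -> br u w \in S) -> (brv br U W <= S)%VS.
Proof.
move=> brUW; apply/subv_sumP => i _; apply/subv_sumP => j _.
by rewrite -memvE brUW // vbasis_mem // mem_tnth.
Qed.

Lemma br_derived x y : br x y \in D.
Proof. exact: brv_memv (memvf _) (memvf _). Qed.

Lemma perfect_not_solvable : (fullv <= D)%VS -> D != 0%VS -> ~ solvable br.
Proof.
move=> perfect D_nz [k]; suff -> : dser br k = fullv.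
  by move=> full0; move: D_nz; rewrite -subv0 -full0 subvf.
elim: k => //= k ->; apply/eqP; rewrite eqEsubv subvf; exact: perfect.
Qed.

Lemma lcs2_center_nilpotent : (lcs br 2 <= Z)%VS -> nilpotent br.
Proof.
move=> lcs2Z; exists 3; apply/eqP; rewrite -subv0.
by apply: brv_subv => u w _ /(subvP lcs2Z) Zw; rewrite (br_centerr _ Zw) mem0v.
Qed.

Definition lin3 (u v w : V) (k1 k2 k3 : F) := k1 *: u + k2 *: v + k3 *: w.

Lemma lin3D u v w k1 k2 k3 l1 l2 l3 :
  lin3 u v w k1 k2 k3 + lin3 u v w l1 l2 l3 = lin3 u v w (k1 + l1) (k2 + l2) (k3 + l3).
Proof. by apply/rowP => j; rewrite !mxE; ring. Qed.

Lemma lin3_span u v w k1 k2 k3 : lin3 u v w k1 k2 k3 \in <<[:: u; v; w]>>%VS.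
Proof. by rewrite !memvD // memvZ // memv_span // !inE eqxx ?orbT. Qed.

Lemma span3P u v w x :
  x \in <<[:: u; v; w]>>%VS -> exists k1 k2 k3, x = lin3 u v w k1 k2 k3.
Proof.
rewrite !span_cons span_nil addv0 => /memv_addP[_ /vlineP[k1 ->]].
move=> [_ /memv_addP[_ /vlineP[k2 ->] [_ /vlineP[k3 ->]] ->] ->].
by exists k1, k2, k3; rewrite /lin3 addrA.
Qed.

Lemma heisenberg_free u v : br u v \in Z -> br u v != 0 -> free [:: u; v; br u v].
Proof.
move=> Zuv uv_nz; rewrite 2!free_cons seq1_free uv_nz andbT; apply/andP; split.
  rewrite span_cons span_seq1; apply/memv_addP => -[_ /vlineP[k1 ->] [_ /vlineP[k2 ->] uE]].
  by move/eqP: uv_nz; apply; rewrite uE brDl !brZl brxx br_centerl // !scaler0 addr0.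
rewrite span_seq1; apply/vlineP => -[k vE]; move/eqP: uv_nz; apply.
by rewrite vE brZr br_centerr // scaler0.
Qed.

Lemma heisenberg_basis u v : \dim D = 3%N -> u \in D -> v \in D ->
    br u v \in Z -> br u v != 0 ->
  exists x y z : V, [/\ basis_of D [:: x; y; z], br x y = z, br x z = 0 & br y z = 0].
Proof.
move=> dimD Du Dv Zuv uv_nz; exists u, v, (br u v).
split; [|by []|exact: br_centerr|exact: br_centerr].
rewrite basisEfree dimD leqnn andbT.
rewrite heisenberg_free //=; apply/span_subvP => w.
by rewrite !inE => /or3P[] /eqP ->; rewrite ?br_derived.
Qed.

Section Coordinates.
Variables a b c : V.
Hypothesis abcZ : (<<[:: a; b; c]>> + Z)%VS = fullv.
Notation comb := (lin3 a b c).
Notation brs := (lin3 (br b c) (br c a) (br a b)).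

Lemma comb_modZ x : exists x1 x2 x3, x - comb x1 x2 x3 \in Z.
Proof.
have : x \in (<<[:: a; b; c]>> + Z)%VS by rewrite abcZ memvf.
case/memv_addP => _ /span3P[x1 [x2 [x3 ->]]] [z Zz ->].
by exists x1, x2, x3; rewrite addrC addKr.
Qed.

Lemma br_comb x1 x2 x3 y1 y2 y3 :
  br (comb x1 x2 x3) (comb y1 y2 y3)
  = brs (x2 * y3 - x3 * y2) (x3 * y1 - x1 * y3) (x1 * y2 - x2 * y1).
Proof.
rewrite /lin3 !brDl !brDr !brZl !brZr !brxx (brC a b) (brC b c) (brC c a).
by apply/rowP => j; rewrite !mxE; ring.
Qed.

Lemma br_comb_modZ x y x1 x2 x3 y1 y2 y3 :
    x - comb x1 x2 x3 \in Z -> y - comb y1 y2 y3 \in Z ->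
  br x y = brs (x2 * y3 - x3 * y2) (x3 * y1 - x1 * y3) (x1 * y2 - x2 * y1).
Proof. by move=> Zx Zy; rewrite (br_modZ Zx Zy) br_comb. Qed.

Lemma derived_span : D = <<[:: br b c; br c a; br a b]>>%VS.
Proof.
apply/eqP; rewrite eqEsubv; apply/andP; split.
  apply: brv_subv => u w _ _.
  have [x1 [x2 [x3 Zu]]] := comb_modZ u; have [y1 [y2 [y3 Zw]]] := comb_modZ w.
  by rewrite (br_comb_modZ Zu Zw) lin3_span.
by apply/span_subvP => v; rewrite !inE => /or3P[] /eqP ->; rewrite br_derived.
Qed.

Hypotheses (pureL : (Z <= D)%VS) (dimD : \dim D = 3%N).

Lemma brs_eq0 k1 k2 k3 : brs k1 k2 k3 = 0 -> [/\ k1 = 0, k2 = 0 & k3 = 0].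
Proof.
have /freeP free_brs : free [:: br b c; br c a; br a b].
  by rewrite /free -derived_span dimD.
move=> brs0; pose k (i : 'I_3) := [:: k1; k2; k3]`_i.
have /free_brs k0 : \sum_(i < 3) k i *: [:: br b c; br c a; br a b]`_i = 0.
  by rewrite !big_ord_recr big_ord0 /= add0r.
by split; [exact: (k0 0) | exact: (k0 1) | exact: (k0 2)].
Qed.

Lemma derived_brsP x : x \in D -> exists k1 k2 k3, x = brs k1 k2 k3.
Proof. by rewrite derived_span => /span3P. Qed.

Lemma symmetric_structure_constants : exists n11 n12 n13 n22 n23 n33,
  [/\ br b c - comb n11 n12 n13 \in Z, br c a - comb n12 n22 n23 \in Z
    & br a b - comb n13 n23 n33 \in Z].
Proof.
have [r1 [r2 [r3 Zbc]]] := comb_modZ (br b c).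
have [s1 [s2 [s3 Zca]]] := comb_modZ (br c a).
have [t1 [t2 [t3 Zab]]] := comb_modZ (br a b).
have Za : a - comb 1 0 0 \in Z by rewrite /lin3 scale1r !scale0r !addr0 subrr mem0v.
have Zb : b - comb 0 1 0 \in Z by rewrite /lin3 scale1r !scale0r add0r addr0 subrr mem0v.
have Zc : c - comb 0 0 1 \in Z by rewrite /lin3 scale1r !scale0r !add0r subrr mem0v.
have := jacobi a b c.
rewrite (br_comb_modZ Za Zbc) (br_comb_modZ Zb Zca) (br_comb_modZ Zc Zab) !lin3D.
case/brs_eq0 => e1 e2 e3.
have s1E : s1 = r2 by apply/subr0_eq; rewrite -[RHS]oppr0 -e3; ring.
have t1E : t1 = r3 by apply/subr0_eq; rewrite -e2; ring.
have t2E : t2 = s3 by apply/subr0_eq; rewrite -[RHS]oppr0 -e1; ring.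
by rewrite s1E in Zca; rewrite t1E t2E in Zab; exists r1, r2, r3, s2, s3, t3.
Qed.

Section StructureConstants.
Variables n11 n12 n13 n22 n23 n33 : F.
Hypotheses (Nbc : br b c - comb n11 n12 n13 \in Z)
  (Nca : br c a - comb n12 n22 n23 \in Z) (Nab : br a b - comb n13 n23 n33 \in Z).

Lemma brs_modZ k1 k2 k3 y1 y2 y3 :
    y1 = n11 * k1 + n12 * k2 + n13 * k3 -> y2 = n12 * k1 + n22 * k2 + n23 * k3 ->
    y3 = n13 * k1 + n23 * k2 + n33 * k3 ->
  brs k1 k2 k3 - comb y1 y2 y3 \in Z.
Proof.
move=> -> -> ->; rewrite [X in X \in _](_ : _ = k1 *: (br b c - comb n11 n12 n13)
  + k2 *: (br c a - comb n12 n22 n23) + k3 *: (br a b - comb n13 n23 n33)).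
  by rewrite !memvD ?memvZ.
by apply/rowP => j; rewrite !mxE; ring.
Qed.

(* The adjugate M = (m_ij) of N = (n_ij), and det N. *)
Let m11 := n22 * n33 - n23 * n23.
Let m12 := n13 * n23 - n12 * n33.
Let m13 := n12 * n23 - n13 * n22.
Let m22 := n11 * n33 - n13 * n13.
Let m23 := n12 * n13 - n11 * n23.
Let m33 := n11 * n22 - n12 * n12.
Let detN := n11 * m11 + n12 * m12 + n13 * m13.

Lemma br_brs_basis :
  [/\ br (br c a) (br a b) = brs m11 m12 m13, br (br a b) (br b c) = brs m12 m22 m23
    & br (br b c) (br c a) = brs m13 m23 m33].
Proof.
by split; [rewrite (br_comb_modZ Nca Nab) | rewrite (br_comb_modZ Nab Nbc)
  | rewrite (br_comb_modZ Nbc Nca)];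
  congr lin3; rewrite /m11 /m12 /m13 /m22 /m23 /m33; ring.
Qed.

Lemma brs_adj_modZ :
  [/\ brs m11 m12 m13 - detN *: a \in Z, brs m12 m22 m23 - detN *: b \in Z
    & brs m13 m23 m33 - detN *: c \in Z].
Proof.
have [-> -> ->] : [/\ detN *: a = comb detN 0 0, detN *: b = comb 0 detN 0
                    & detN *: c = comb 0 0 detN].
  by split; rewrite /lin3 !scale0r ?add0r ?addr0.
by split; apply: brs_modZ; rewrite /detN /m11 /m12 /m13 /m22 /m23 /m33; ring.
Qed.

(* [x, brs k] = (M x) \times k modulo Z, in the coordinates a, b, c. *)
Lemma br_brs_modZ x x1 x2 x3 k1 k2 k3 y1 y2 y3 : x - comb x1 x2 x3 \in Z ->
    y1 = (m12 * x1 + m22 * x2 + m23 * x3) * k3 - (m13 * x1 + m23 * x2 + m33 * x3) * k2 ->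
    y2 = (m13 * x1 + m23 * x2 + m33 * x3) * k1 - (m11 * x1 + m12 * x2 + m13 * x3) * k3 ->
    y3 = (m11 * x1 + m12 * x2 + m13 * x3) * k2 - (m12 * x1 + m22 * x2 + m23 * x3) * k1 ->
  br x (brs k1 k2 k3) - comb y1 y2 y3 \in Z.
Proof.
move=> Zx -> -> ->.
rewrite (br_comb_modZ Zx (@brs_modZ k1 k2 k3 _ _ _ erefl erefl erefl)).
by apply: brs_modZ; rewrite /m11 /m12 /m13 /m22 /m23 /m33; ring.
Qed.

Lemma derived_full : detN != 0 -> (fullv <= D)%VS.
Proof.
move=> det_nz; have [Ea Eb Ec] := br_brs_basis; have [Za Zb Zc] := brs_adj_modZ.
have inD w v : w - detN *: v \in Z -> w \in D -> v \in D.
  move=> /(subvP pureL) Dwv Dw; rewrite -(scalerK det_nz v) memvZ //.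
  by rewrite -(subKr w (detN *: v)) memvB.
rewrite -abcZ subv_add pureL andbT; apply/span_subvP => v; rewrite !inE.
by case/or3P => /eqP ->; [apply: inD Za _ | apply: inD Zb _ | apply: inD Zc _];
  rewrite -?Ea -?Eb -?Ec br_derived.
Qed.

Lemma lcs2_center : br (br c a) (br a b) = 0 -> br (br a b) (br b c) = 0 ->
  br (br b c) (br c a) = 0 -> (lcs br 2 <= Z)%VS.
Proof.
have [-> -> ->] := br_brs_basis.
move=> /brs_eq0[m11_0 m12_0 m13_0] /brs_eq0[_ m22_0 m23_0] /brs_eq0[_ _ m33_0].
apply: brv_subv => u w _ /derived_brsP[k1 [k2 [k3 ->]]].
have [x1 [x2 [x3 Zu]]] := comb_modZ u.
have comb0 : comb 0 0 0 = 0 by rewrite /lin3 !scale0r !addr0.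
rewrite -[br _ _]subr0 -comb0.
by apply: br_brs_modZ Zu _ _ _; rewrite ?m11_0 ?m12_0 ?m13_0 ?m22_0 ?m23_0 ?m33_0; ring.
Qed.

Lemma heisenberg_of_structure_constants : ~ nilpotent br -> solvable br ->
  exists x y z : V, [/\ basis_of D [:: x; y; z], br x y = z, br x z = 0 & br y z = 0].
Proof.
move=> not_nil solv; have [det0 | det_nz] := eqVneq detN 0; last first.
  exfalso; apply: perfect_not_solvable (derived_full det_nz) _ solv.
  by rewrite -dimv_eq0 dimD.
have [Ea Eb Ec] := br_brs_basis; have [] := brs_adj_modZ.
rewrite det0 !scale0r !subr0 -Ea -Eb -Ec => Zca_ab Zab_bc Zbc_ca.
have heisenberg u v u' v' := heisenberg_basis dimD (br_derived u v) (br_derived u' v').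
have [ca_ab0 | nz] := eqVneq (br (br c a) (br a b)) 0; first last.
  exact: heisenberg Zca_ab nz.
have [ab_bc0 | nz] := eqVneq (br (br a b) (br b c)) 0; first last.
  exact: heisenberg Zab_bc nz.
have [bc_ca0 | nz] := eqVneq (br (br b c) (br c a)) 0; first last.
  exact: heisenberg Zbc_ca nz.
by case: not_nil; apply/lcs2_center_nilpotent/lcs2_center.
Qed.

End StructureConstants.
End Coordinates.
End LieAlgebra.

Theorem lemma3p1 (R : realType) (n : nat)
    (br : 'rV[R[i]]_n -> 'rV[R[i]]_n -> 'rV[R[i]]_n) :
  is_lie br -> pure br -> ~ nilpotent br -> solvable br -> has_breadth br 2 ->
  \dim (derived br) = 3%N ->
  (\dim (fullv : {vspace 'rV[R[i]]_n}) - \dim (centerv br))%N = 3%N ->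
  exists x y z : 'rV[R[i]]_n,
    [/\ basis_of (derived br) [:: x; y; z],
        br x y = z, br x z = 0 & br y z = 0].
Proof.
move=> lieL pureL not_nil solv _ dimD codimZ.
have /andP[/eqP spanZc _] := vbasisP (centerv br)^C.
have : size (vbasis (centerv br)^C) = 3%N by rewrite size_tuple dimv_compl codimZ.
move: spanZc; case: (tval _) => [|a [|b [|c [|? ?]]]] //= spanZc _.
have abcZ : (<<[:: a; b; c]>> + centerv br)%VS = fullv.
  by rewrite spanZc addvC addv_complf.
have [n11 [n12 [n13 [n22 [n23 [n33 [Nbc Nca Nab]]]]]]] :=
  symmetric_structure_constants lieL abcZ dimD.
exact: (heisenberg_of_structure_constants lieL abcZ pureL dimD Nbc Nca Nab not_nil solv).
Qed.
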